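(* Let $k\ge 3$ and let $p>3$ be a prime dividing $2k+1$. Then every root (in an algebraic closure of $\mathbb{F}_p$) of the reduction of $Q_{k-1}(q)$ modulo $p$, and hence of $P_{k-1}(q)$ modulo $p$, has multiplicity at most $4$. Consequently, for every $a\in\mathbb{F}_p$, $(x-a)^5$ does not divide $p_{k-1}(x)$ in $\mathbb{F}_p[x]$; in particular the exponents $n_a$ in any factorization $m_{k-1}(x)\equiv x\prod_{a\neq0}(x-a)^{n_a}\pmod p$ satisfy $n_a\le 4$.
   Context: $Q_{k-1}(q)=q^{4k+4}-q^{4k+3}-q^{4k+2}-q^{4k+1}+q^3+q^2+q-1=(q^4-1)P_{k-1}(q)$ with $P_{k-1}(q)=1+\sum_{l=1}^{k} q^{4l-4}(q^4-q^3-q^2-q)$. $p_{k-1}(x)$ is the polynomial with $P_{k-1}(q)=q^{2k}p_{k-1}(q+q^{-1})$ (given by $p_0=x^2-x-3$, $p_1=(x^3-2x^2-3x+5)(x+1)$, $p_k=(x^2-2)p_{k-1}-p_{k-2}$), and $m_{k-1}$ is $p_{k-1}$ if $k\not\equiv2\pmod3$ and $p_{k-1}/(x+1)$ if $k\equiv2\pmod 3$. *)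

From HB Require Import structures.
From mathcomp Require Import all_boot all_order all_algebra all_field.
Set Implicit Arguments. Unset Strict Implicit. Unset Printing Implicit Defensive.
Import Order.TTheory GRing.Theory Num.Theory.
Local Open Scope ring_scope.

(* Qk k = Q_{k-1}(q) = q^{4k+4}-q^{4k+3}-q^{4k+2}-q^{4k+1}+q^3+q^2+q-1 in Z[q] *)
Definition Qk (k : nat) : {poly int} :=
  'X^((4*k+4)%N) - 'X^((4*k+3)%N) - 'X^((4*k+2)%N) - 'X^((4*k+1)%N) + 'X^3 + 'X^2 + 'X - 1.

(* Pk k = P_{k-1}(q) = 1 + sum_{l=1}^k q^{4l-4}(q^4-q^3-q^2-q) *)
Definition Pk (k : nat) : {poly int} :=
  1 + \sum_(1%N <= l < k.+1) 'X^((4 * l - 4)%N) * ('X^4 - 'X^3 - 'X^2 - 'X).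

(* pair (p_j, p_{j+1}) *)
Fixpoint ppair (j : nat) : {poly int} * {poly int} :=
  match j with
  | 0 => ('X^2 - 'X - 3%:P,
          ('X^3 - 2%:P * 'X^2 - 3%:P * 'X + 5%:P) * ('X + 1))
  | j'.+1 => let: (a, b) := ppair j' in (b, ('X^2 - 2%:P) * b - a)
  end.

Definition psmall (j : nat) : {poly int} := (ppair j).1.

(* msmall k = m_{k-1}: p_{k-1} if k mod 3 <> 2, and p_{k-1}/(x+1) otherwise *)
Definition msmall (k : nat) : {poly int} :=
  if (k %% 3 == 2)%N then psmall k.-1 %/ ('X + 1) else psmall k.-1.

Definition redp (R : nzRingType) (f : {poly int}) : {poly R} :=
  map_poly (fun z : int => z%:~R) f.

From HB Require Import structures.
From mathcomp Require Import all_boot all_order all_algebra all_field.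
From mathcomp Require Import ring zify.
Import Order.TTheory GRing.Theory Num.Theory.
Local Open Scope ring_scope.
Set Implicit Arguments. Unset Strict Implicit. Unset Printing Implicit Defensive.

(* Let p > 3 be a prime dividing 2k + 1 and put n = 4k + 1, so n + 1 = 0 mod p.
   1. Q_{k-1} reduced mod p is Q_n = X^(n+3) - X^(n+2) - X^(n+1) - X^n + X^3
      + X^2 + X - 1, a sum of five eigenvectors of the Euler operator
      E = X d/dX with eigenvalues 3, 2, 1, 0, -1.  A root z of multiplicity
      >= 5 is a root of E^i Q_n for i < 5; a Vandermonde-type elimination
      gives 24 z^3 = 0, so z = 0, but Q_n(0) = -1.  Since Q = (X^4 - 1) P,
      the same bound holds for P_{k-1}, which gives the multiplicity bounds.
   2. For x != 0 and u = x + 1/x one has P_{k-1}(x) = x^(2k) p_{k-1}(u), by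
      the common three-term recurrence.  If (X - a)^5 divided p_{k-1} in
      F_p[X], pick w with w + 1/w = a in an algebraic closure; then
      x (u - a) = (x - w)(x - 1/w) turns the substitution identity into
      (X - w)^5 | P_{k-1}, contradicting step 1.
   3. m_{k-1} divides p_{k-1} (p_{k-1}(-1) = 0 when k = 2 mod 3), so a factor
      (X - a)^5 of m_{k-1} is excluded by step 2. *)

HB.instance Definition _ (R : nzRingType) :=
  GRing.RMorphism.copy (@redp R) (map_poly (fun z : int => z%:~R)).

Lemma redpX (R : nzRingType) : redp R 'X = 'X.
Proof. exact: map_polyX. Qed.

Lemma redpXn (R : nzRingType) m : redp R 'X^m = 'X^m.
Proof. exact: map_polyXn. Qed.

Lemma redpC (R : nzRingType) (c : int) : redp R c%:P = (c%:~R)%:P.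
Proof. exact: map_polyC. Qed.

Section EulerOperator.
Variable L : fieldType.
Implicit Types (F G : {poly L}) (c z : L).

Definition euler F : {poly L} := 'X * F^`().

Lemma eulerD F G : euler (F + G) = euler F + euler G.
Proof. by rewrite /euler derivD mulrDr. Qed.

Lemma eulerZ c F : euler (c *: F) = c *: euler F.
Proof. by rewrite /euler derivZ scalerAr. Qed.

Lemma eulerN F : euler (- F) = - euler F.
Proof. by rewrite -scaleN1r eulerZ scaleN1r. Qed.

Lemma euler_Xn m : euler 'X^m = m%:R *: 'X^m.
Proof.
rewrite /euler derivXn scaler_nat; case: m => [|m].
  by rewrite !mulr0n mulr0.
by rewrite mulrnAr -exprS.
Qed.

Lemma euler_X : euler 'X = 'X.
Proof. by rewrite /euler derivX mulr1. Qed.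

Lemma eulerC c : euler c%:P = 0.
Proof. by rewrite /euler derivC mulr0. Qed.

Lemma iter_eulerD i F G :
  iter i euler (F + G) = iter i euler F + iter i euler G.
Proof. by elim: i => //= i ->; rewrite eulerD. Qed.

Lemma iter_euler_eigen i c F : euler F = c *: F -> iter i euler F = c ^+ i *: F.
Proof.
move=> eF; elim: i => [|i IH] /=; first by rewrite scale1r.
by rewrite IH eulerZ eF scalerA -exprSr.
Qed.

Lemma dvdp_euler z m F :
  ('X - z%:P) ^+ m.+1 %| F -> ('X - z%:P) ^+ m %| euler F.
Proof.
case/dvdpP=> S ->; rewrite /euler derivM deriv_exp derivXsubC mul1r /=.
apply: dvdp_mull; apply: dvdp_add.
  by rewrite exprS mulrA dvdp_mull.
by rewrite -mulr_natr mulrA dvdp_mulr // dvdp_mulIr.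
Qed.

Lemma root_iter_euler z m F :
  ('X - z%:P) ^+ m %| F -> forall i, (i < m)%N -> (iter i euler F).[z] = 0.
Proof.
elim: m F => // m IH F dvdF [|i] lt_im.
  apply/eqP; rewrite -/(root F z) -dvdp_XsubCl.
  by apply: dvdp_trans dvdF; rewrite exprS dvdp_mulr.
by rewrite iterSr; apply: IH (dvdp_euler dvdF) _ lt_im.
Qed.

End EulerOperator.
Arguments euler {L} F.

(* Let n + 1 = 0 in L.  Then Q_n = X^(n+3) - X^(n+2) - X^(n+1) - X^n
   + X^3 + X^2 + X - 1 splits into eigenvectors of E for the eigenvalues
   3, 2, 1, 0, -1.  If (X - z)^5 divided Q_n, the five values
   (E^i Q_n)(z), i < 5, would vanish; eliminating the last four
   eigencomponents leaves 24 z^3 = 0, hence z = 0, while Q_n(0) = -1. *)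
Section WeightDecomposition.
Variables (L : fieldType) (n : nat).
Hypothesis n1_eq0 : n.+1%:R = 0 :> L.

Definition Qn : {poly L} :=
  'X^(n + 3) - 'X^(n + 2) - 'X^(n + 1) - 'X^n + 'X^3 + 'X^2 + 'X - 1.

Definition W3 : {poly L} := 'X^3.
Definition W2 : {poly L} := 'X^(n + 3) + 'X^2.
Definition W1 : {poly L} := 'X - 'X^(n + 2).
Definition W0 : {poly L} := - 'X^(n + 1) - 1.
Definition Wm : {poly L} := - 'X^n.

Lemma Qn_weights : Qn = W3 + W2 + W1 + W0 + Wm.
Proof. rewrite /Qn /W3 /W2 /W1 /W0 /Wm; ring. Qed.

Lemma natn_eqN1 : n%:R = -1 :> L.
Proof. by apply/eqP; rewrite -addr_eq0 natr1 n1_eq0. Qed.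

Lemma natn_add i : (n + i)%:R = i%:R - 1 :> L.
Proof. by rewrite natrD natn_eqN1 addrC. Qed.

Lemma euler_W3 : euler W3 = 3%:R *: W3.
Proof. exact: euler_Xn. Qed.

Lemma euler_W2 : euler W2 = 2%:R *: W2.
Proof.
rewrite /W2 eulerD !euler_Xn natn_add scalerDr.
by have -> : (3%:R - 1 : L) = 2%:R by ring.
Qed.

Lemma euler_W1 : euler W1 = 1 *: W1.
Proof.
rewrite /W1 eulerD eulerN euler_X euler_Xn natn_add scale1r.
have -> : (2%:R - 1 : L) = 1 by ring.
by rewrite scale1r.
Qed.

Lemma euler_W0 : euler W0 = 0 *: W0.
Proof.
by rewrite /W0 eulerD !eulerN euler_Xn -polyC1 eulerC natn_add subrr !scale0r oppr0 addr0.
Qed.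

Lemma euler_Wm : euler Wm = -1 *: Wm.
Proof. by rewrite /Wm eulerN euler_Xn natn_eqN1 scalerN. Qed.

Lemma horner_iter_euler_Qn i z :
  (iter i euler Qn).[z] = 3%:R ^+ i * z ^+ 3 + 2%:R ^+ i * W2.[z]
    + W1.[z] + 0 ^+ i * W0.[z] + (-1) ^+ i * Wm.[z].
Proof.
rewrite Qn_weights 4!iter_eulerD (iter_euler_eigen _ euler_W3)
  (iter_euler_eigen _ euler_W2) (iter_euler_eigen _ euler_W1)
  (iter_euler_eigen _ euler_W0) (iter_euler_eigen _ euler_Wm).
by rewrite 4!hornerD !hornerZ expr1n mul1r /W3 hornerXn.
Qed.

Lemma Qn_no_quintic_factor z :
  (0 < n)%N -> 2%:R != 0 :> L -> 3%:R != 0 :> L ->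
  ~~ (('X - z%:P) ^+ 5 %| Qn).
Proof.
move=> n_gt0 two_neq0 three_neq0; apply/negP=> dvd5.
pose s i := (iter i euler Qn).[z].
have s0 i : (i < 5)%N -> s i = 0 := root_iter_euler dvd5 (i := i).
have z3 : (2 * 2 * 2 * 3)%:R * z ^+ 3 = 0.
  have -> : (2 * 2 * 2 * 3)%:R * z ^+ 3 = s 4 - 2%:R * s 3 - s 2 + 2%:R * s 1.
    by rewrite /s !horner_iter_euler_Qn; ring.
  by rewrite !s0 // !mulr0 !subr0 addr0.
have z0 : z = 0.
  move/eqP: z3; rewrite !natrM !mulf_eq0 (negbTE two_neq0) (negbTE three_neq0).
  by rewrite /= !orbb => /eqP.
have := s0 0 isT; rewrite /s /= z0 /Qn !hornerE !expr0n !addn_eq0 andbF /=.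
rewrite (negbTE (lt0n_neq0 n_gt0)) !(subr0, addr0, add0r, sub0r) => /eqP.
by rewrite oppr_eq0 oner_eq0.
Qed.

End WeightDecomposition.

Lemma PkS j : Pk j.+1 = Pk j + 'X^(4 * j) * ('X^4 - 'X^3 - 'X^2 - 'X).
Proof. by rewrite /Pk big_nat_recr //= mulnS addKn addrA. Qed.

Lemma PkSS j : Pk j.+2 = ('X^4 + 1) * Pk j.+1 - 'X^4 * Pk j.
Proof. rewrite !PkS mulnS exprD; ring. Qed.

Lemma Pk_telescope k :
  ('X^4 - 1) * Pk k = 'X^4 - 1 + ('X^(4 * k) - 1) * ('X^4 - 'X^3 - 'X^2 - 'X).
Proof.
elim: k => [|k IH]; first by rewrite /Pk big_geq // addr0 muln0 expr0; ring.
by rewrite PkS mulrDr IH mulnS exprD; ring.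
Qed.

Lemma Qk_factor k : Qk k = ('X^4 - 1) * Pk k.
Proof. by rewrite Pk_telescope /Qk !exprD; ring. Qed.

Lemma psmallS j : psmall j.+1 = (ppair j).2.
Proof. by rewrite /psmall /=; case: (ppair j). Qed.

Lemma psmallSS j : psmall j.+2 = ('X^2 - 2%:P) * psmall j.+1 - psmall j.
Proof. by rewrite !psmallS /psmall /=; case: (ppair j). Qed.

Section PositiveCharacteristic.
Variables (L : fieldType) (k p : nat).
Hypotheses (charL : p \in [pchar L]) (p_gt3 : (3 < p)%N)
  (p_dvd : (p %| (2 * k).+1)%N).

Lemma pchar_small_neq0 m : (0 < m < p)%N -> m%:R != 0 :> L.
Proof.
case/andP=> m_gt0 lt_mp; rewrite -(dvdn_pcharf charL).
by apply/negP=> /(dvdn_leq m_gt0); rewrite leqNgt lt_mp.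
Qed.

(* n + 1 = 4k + 2 = 2 (2k + 1) vanishes in L. *)
Lemma nat4k2_eq0 : (4 * k + 1).+1%:R = 0 :> L.
Proof.
have -> : (4 * k + 1).+1 = ((2 * k).+1 * 2)%N by lia.
by rewrite natrM; move: p_dvd; rewrite (dvdn_pcharf charL) => /eqP ->; rewrite mul0r.
Qed.

Lemma redp_Qk : redp L (Qk k) = Qn L (4 * k + 1).
Proof.
rewrite /Qk !(rmorphB, rmorphD) rmorph1 /= !redpXn redpX.
by rewrite /Qn -!addnA.
Qed.

Lemma Qk_no_quintic_factor z : ~~ (('X - z%:P) ^+ 5 %| redp L (Qk k)).
Proof.
rewrite redp_Qk; apply: (Qn_no_quintic_factor nat4k2_eq0); first by lia.
  by apply: pchar_small_neq0; lia.
by apply: pchar_small_neq0; lia.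
Qed.

(* Divisors of P_{k-1} divide Q_{k-1} = (X^4 - 1) P_{k-1}. *)
Lemma Pk_no_quintic_factor z : ~~ (('X - z%:P) ^+ 5 %| redp L (Pk k)).
Proof.
apply: contra (Qk_no_quintic_factor z) => dvdP.
by rewrite Qk_factor rmorphM dvdp_mull.
Qed.

Lemma mup_Qk_Pk z :
  (mup z (redp L (Qk k)) <= 4)%N /\ (mup z (redp L (Pk k)) <= 4)%N.
Proof.
have neq0 (f : {poly L}) : ~~ (('X - z%:P) ^+ 5 %| f) -> f != 0.
  by apply: contraNneq => ->; rewrite dvdp0.
split; rewrite -ltnS mup_ltn.
- exact: Qk_no_quintic_factor.
- exact/neq0/Qk_no_quintic_factor.
- exact: Pk_no_quintic_factor.
- exact/neq0/Pk_no_quintic_factor.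
Qed.

End PositiveCharacteristic.

Definition ev (K : fieldType) (t : K) : {poly int} -> K := horner_eval t \o redp K.
HB.instance Definition _ (K : fieldType) (t : K) := GRing.RMorphism.on (ev t).

Lemma evX (K : fieldType) (t : K) : ev t 'X = t.
Proof. by rewrite /ev /= horner_evalE redpX hornerX. Qed.

Lemma evC (K : fieldType) (t : K) (c : int) : ev t c%:P = c%:~R.
Proof. by rewrite /ev /= horner_evalE redpC hornerC. Qed.

Lemma ev_PkSS (K : fieldType) (t : K) j :
  ev t (Pk j.+2) = (t ^+ 4 + 1) * ev t (Pk j.+1) - t ^+ 4 * ev t (Pk j).
Proof. by rewrite PkSS rmorphB !rmorphM rmorphD rmorphXn rmorph1 /= evX. Qed.

Lemma ev_psmallSS (K : fieldType) (t : K) j :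
  ev t (psmall j.+2) = (t ^+ 2 - 2%:R) * ev t (psmall j.+1) - ev t (psmall j).
Proof. by rewrite psmallSS rmorphB rmorphM rmorphB rmorphXn /= evX evC. Qed.

Section PalindromicSubstitution.
Variables (K : fieldType) (x : K).
Hypothesis x_neq0 : x != 0.
Let u := x + x^-1.

(* The palindromic substitution P_{j}(x) = x^(2j+2) p_j(x + 1/x) (here
   Pk j.+1 is P_j); both sides obey the same recurrence because
   x^2 (u^2 - 2) = x^4 + 1. *)
Lemma Pk_palindromic j : ev x (Pk j.+1) = x ^+ (2 * j.+1) * ev u (psmall j).
Proof.
suff two_steps i : ev x (Pk i.+1) = x ^+ (2 * i.+1) * ev u (psmall i)
  /\ ev x (Pk i.+2) = x ^+ (2 * i.+2) * ev u (psmall i.+1).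
  by case: (two_steps j).
elim: i => [|i [IH1 IH2]].
  rewrite !PkS psmallS /Pk big_geq // /psmall /=.
  rewrite !(rmorphB, rmorphD, rmorphM, rmorph1, rmorphXn) /= !evX.
  by split; rewrite /u; field.
split=> //; rewrite ev_PkSS ev_psmallSS IH1 IH2.
have -> : (2 * i.+3 = 2 * i.+1 + 4)%N by lia.
have -> : (2 * i.+2 = 2 * i.+1 + 2)%N by lia.
by rewrite !exprD /u; field.
Qed.
End PalindromicSubstitution.

Lemma factor_shift (F : fieldType) (x c d : F) :
  x != 0 -> c * (d - c) = 1 -> x * (x + x^-1 - d) = (x - c) * (x - (d - c)).
Proof.
move=> x_neq0 cdc; have -> : x * (x + x^-1 - d) = x ^+ 2 - d * x + 1 by field.
by rewrite -cdc; ring.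
Qed.

(* Transfer of a quintuple root from p_j to P_j: writing a = w + 1/w,
   p_j = (X - a)^5 S gives, in the field of rational functions with x the
   class of X and u = x + 1/x, x^(size S) P_j(x) = x^(2j-3) (x - w)^5
   (x - 1/w)^5 (x^(size S) S(u)), a polynomial identity; as X^(size S) is
   coprime to X - w, (X - w)^5 divides P_j. *)
Section RationalFunctions.
Variable L : fieldType.
Local Notation K := {fraction {poly L}}.
Local Notation tf := (@tofrac {poly L}).
Definition constf : L -> K := tf \o polyC.
Let x : K := tf 'X.
Let u : K := x + x^-1.

Lemma tofracX_neq0 : x != 0.
Proof. by rewrite /x tofrac_eq0 polyX_eq0. Qed.

Lemma tofracX_mul_u : x * u = x ^+ 2 + 1.
Proof. by rewrite /u mulrDr mulfV ?tofracX_neq0 // expr2. Qed.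

Lemma redp_frac f : redp K f = map_poly constf (redp L f).
Proof.
by rewrite /redp -map_poly_comp; apply: eq_map_poly => c /=; rewrite -(rmorph_int constf).
Qed.

Lemma ev_tofrac f : ev x f = tf (redp L f).
Proof.
rewrite /ev /= horner_evalE redp_frac.
by rewrite /constf map_poly_comp /x horner_map -/(comp_poly 'X _) comp_polyXr.
Qed.

Lemma tofrac_XsubC c : tf ('X - c%:P) = x - constf c.
Proof. exact: rmorphB. Qed.

Lemma homogenize (S : {poly L}) :
  exists V, x ^+ size S * (map_poly constf S).[u] = tf V.
Proof.
elim/poly_ind: S => [|S c [V hV]].
  by exists 0; rewrite rmorph0 horner0 mulr0 rmorph0.
rewrite size_MXaddC; case: ifP => [/andP[/eqP -> /eqP ->]|_].
  by exists 0; rewrite mul0r add0r !rmorph0 horner0 mulr0.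
exists (V * ('X ^+ 2 + 1) + 'X ^+ (size S).+1 * c%:P).
rewrite rmorphD rmorphM /= map_polyX map_polyC hornerD hornerM hornerX hornerC.
rewrite !rmorphD !rmorphM !rmorphXn /= rmorphD rmorph1 rmorphXn /= -/x -/constf -hV.
by rewrite -tofracX_mul_u exprS; ring.
Qed.

Lemma quintic_factor_transfer j (a w : L) :
  w * (a - w) = 1 -> (5 <= 2 * j.+1)%N ->
  ('X - a%:P) ^+ 5 %| redp L (psmall j) -> ('X - w%:P) ^+ 5 %| redp L (Pk j.+1).
Proof.
move=> ww' deg_ge5 /dvdpP[S defp].
have [V hV] := homogenize S.
have w_neq0 : w != 0 by apply: contra_eq_neq ww' => ->; rewrite mul0r eq_sym oner_eq0.
have coprime_Xs : coprimep (('X - w%:P) ^+ 5) ('X ^+ size S).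
  apply/coprimep_expl/coprimep_expr.
  rewrite -[X in coprimep _ X]subr0 -[X in coprimep _ (_ - X)]polyC0 coprimep_XsubC.
  by rewrite rootE !hornerE oppr_eq0.
have factor_u : x * (u - constf a) = (x - constf w) * (x - constf (a - w)).
  have constfB : constf (a - w) = constf a - constf w := rmorphB constf a w.
  rewrite constfB; apply: factor_shift tofracX_neq0 _; rewrite -constfB.
  transitivity (constf (w * (a - w))); first exact: esym (rmorphM constf _ _).
  by rewrite ww'; exact: rmorph1 constf.
rewrite -(Gauss_dvdpr _ coprime_Xs); apply/dvdpP.
exists ('X ^+ (2 * j.+1 - 5) * ('X - (a - w)%:P) ^+ 5 * V).
apply/eqP; rewrite -tofrac_eq; apply/eqP.
rewrite !rmorphM !rmorphXn /= !tofrac_XsubC -/x -hV -ev_tofrac Pk_palindromic ?tofracX_neq0 //.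
rewrite /ev /= horner_evalE redp_frac defp rmorphM rmorphXn /= -/constf -/u.
rewrite hornerM horner_exp map_polyXsubC hornerXsubC.
set Su := (map_poly constf S).[u].
have -> : x ^+ (2 * j.+1) = x ^+ (2 * j.+1 - 5) * x ^+ 5 by rewrite -exprD subnK.
transitivity (x ^+ size S * x ^+ (2 * j.+1 - 5) * Su * (x * (u - constf a)) ^+ 5).
  by ring.
by rewrite factor_u; ring.
Qed.
End RationalFunctions.

Lemma map_redp (F L : fieldType) (f : {rmorphism F -> L}) (g : {poly int}) :
  map_poly f (redp F g) = redp L g.
Proof. by rewrite /redp -map_poly_comp; apply: eq_map_poly => c /=; rewrite rmorph_int. Qed.

(* Over an algebraically closed field every a is w + 1/w for some w. *)
Lemma exists_inverse_pair (L : closedFieldType) (a : L) : exists w : L, w * (a - w) = 1.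
Proof.
have [w defw2] := @solve_monicpoly L 2 (fun i => if i is 0 then -1 else a) isT.
exists w; move: defw2; rewrite !big_ord_recl big_ord0 /= expr2 => defw2.
by rewrite mulrBr defw2; ring.
Qed.

(* Main step for p_{k-1}: a root a of multiplicity 5 in F_p would give, in
   an algebraic closure, a root w of P_{k-1} of multiplicity 5. *)
Lemma psmall_no_quintic_factor (k p : nat) (a : 'F_p) :
  (3 <= k)%N -> prime p -> (3 < p)%N -> (p %| (2 * k).+1)%N ->
  ~~ (('X - a%:P) ^+ 5 %| redp 'F_p (psmall k.-1)).
Proof.
move=> k_ge3 p_prime p_gt3 p_dvd; apply/negP=> dvd_a.
have [L [f _]] := countable_algebraic_closure 'F_p.
have charL : p \in [pchar L] := rmorph_pchar f (pchar_Fp p_prime).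
have dvd_fa : ('X - (f a)%:P) ^+ 5 %| redp L (psmall k.-1).
  by rewrite -(map_redp f) -map_polyXsubC -rmorphXn dvdp_map.
have [w ww'] := exists_inverse_pair (f a).
have deg_ge5 : (5 <= 2 * k.-1.+1)%N by lia.
have := quintic_factor_transfer ww' deg_ge5 dvd_fa; rewrite prednK; last by lia.
exact/negP/(Pk_no_quintic_factor charL p_gt3 p_dvd w).
Qed.

Lemma psmallSS_m1 j :
  (psmall j.+2).[-1] = - (psmall j.+1).[-1] - (psmall j).[-1] :> int.
Proof. by rewrite psmallSS !hornerE /= mulN1r. Qed.

Lemma psmall_m1 t : [/\ (psmall (3 * t)).[-1] = -1, (psmall (3 * t).+1).[-1] = 0
  & (psmall (3 * t).+2).[-1] = 1 :> int].
Proof.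
elim: t => [|t [p0 p1 p2]].
  have p0 : (psmall 0).[-1] = -1 :> int by rewrite /psmall /= !hornerE.
  have p1 : (psmall 1).[-1] = 0 :> int by rewrite psmallS /= !hornerE.
  by rewrite muln0 p0 p1 psmallSS_m1 p0 p1.
rewrite mulnS addnC addn3.
have p3 : (psmall (3 * t).+3).[-1] = -1 :> int by rewrite psmallSS_m1 p2 p1.
have p4 : (psmall (3 * t).+4).[-1] = 0 :> int by rewrite psmallSS_m1 p3 p2.
have p5 : (psmall (3 * t).+4.+1).[-1] = 1 :> int by rewrite psmallSS_m1 p4 p3.
by [].
Qed.

(* m_{k-1} divides p_{k-1}: when k = 2 mod 3, -1 is a root of p_{k-1}. *)
Lemma msmall_dvd_psmall k : exists q : {poly int}, psmall k.-1 = q * msmall k.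
Proof.
rewrite /msmall; case: ifP => [k_mod3 | _]; last by exists 1; rewrite mul1r.
have ek : k.-1 = (3 * (k %/ 3)).+1.
  by rewrite {1}(divn_eq k 3) (eqP k_mod3) mulnC addn2.
have root_m1 : root (psmall k.-1) (-1).
  by rewrite /root ek; case: (psmall_m1 (k %/ 3)) => _ -> _.
have [q ->] := factor_theorem _ _ root_m1.
exists ('X + 1); rewrite polyCN opprK Pdiv.IdomainMonic.mulpK 1?mulrC //.
exact: monicXaddC.
Qed.

Theorem mainTheorem12 (k p : nat) (hk : (3 <= k)%N) (hp : prime p)
    (hp3 : (3 < p)%N) (hdiv : (p %| (2 * k).+1)%N) :
  (forall (L : closedFieldType), p \in [pchar L] ->
     forall z : L, (mup z (redp L (Qk k)) <= 4)%N /\ (mup z (redp L (Pk k)) <= 4)%N)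
  /\ (forall a : 'F_p, ~~ (('X - a%:P) ^+ 5 %| redp 'F_p (psmall k.-1)))
  /\ (forall n : 'F_p -> nat,
        redp 'F_p (msmall k) = 'X * \prod_(a : 'F_p | a != 0) ('X - a%:P) ^+ n a ->
        forall a : 'F_p, a != 0 -> (n a <= 4)%N).
Proof.
have no_quintic a := psmall_no_quintic_factor a hk hp hp3 hdiv.
split; first by move=> L charL z; exact: mup_Qk_Pk charL hp3 hdiv z.
split=> // n defm a a_neq0; rewrite leqNgt; apply/negP=> n_gt4.
have [q defp] := msmall_dvd_psmall k.
move/negP: (no_quintic a); apply.
rewrite defp rmorphM /= defm; apply/dvdp_mull/dvdp_mull.
by rewrite (bigD1 a) //= dvdp_mulr // dvdp_exp2l.
Qed.
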